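(* Consider the network $\Sigma$ described in the context. The following assertions are equivalent: (i) $\Sigma$ is well-posed. (ii) $\Sigma$ is well-posed and there exist $C>0$ and $\kappa\in\mathcal{K}_\infty$ such that for all $x\in X$ and $u\in U$, $|f(x,u)|_\infty \le C+\kappa(|x|_\infty)+\kappa(|u|_\infty)$. (iii) There exist $C>0$ and $\kappa\in\mathcal{K}_\infty$ such that for all $i\in\mathbb{N}$ and all $x_i\in\mathbb{R}^{n_i}$, $\bar x_i\in X(I_i)$, $u_i\in\mathbb{R}^{p_i}$, $|f_i(x_i,\bar x_i,u_i)| \le C+\kappa(|x_i|)+\kappa(|\bar x_i|)+\kappa(|u_i|)$.
   Context: Let $\mathbb{N}=\{1,2,\dots\}$. For each $i\in\mathbb{N}$ fix positive integers $n_i,p_i$, norms $|\cdot|$ on $\mathbb{R}^{n_i}$ and on $\mathbb{R}^{p_i}$, and a finite set $I_i\subset\mathbb{N}\setminus\{i\}$, such that for every $i\in\mathbb{N}$ the set $\{j\in\mathbb{N}: i\in I_j\}$ is finite. Let $X(I_i):=\prod_{j\in I_i}\mathbb{R}^{n_j}$ with norm $|\bar x_i|:=\sup_{j\in I_i}|x_j|$ for $\bar x_i=(x_j)_{j\in I_i}$. For each $i$ let $f_i:\mathbb{R}^{n_i}\times X(I_i)\times\mathbb{R}^{p_i}\to\mathbb{R}^{n_i}$ be continuous (subsystem $\Sigma_i: x_i^+=f_i(x_i,\bar x_i,u_i)$). Let $X:=\{x=(x_i)_{i\in\mathbb{N}}: x_i\in\mathbb{R}^{n_i},\ \sup_i|x_i|<\infty\}$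 with norm $|x|_\infty:=\sup_i|x_i|$, and $U:=\{u=(u_i)_{i\in\mathbb{N}}: u_i\in\mathbb{R}^{p_i},\ \sup_i|u_i|<\infty\}$ with norm $|u|_\infty:=\sup_i|u_i|$. Let $X_E:=\prod_{i\in\mathbb{N}}\mathbb{R}^{n_i}$ and define $f:X_E\times U\to X_E$ by $f(x,u)_i:=f_i(x_i,(x_j)_{j\in I_i},u_i)$. The network $\Sigma$ is $x^+=f(x,u)$. $\Sigma$ is called well-posed if $f(x,u)\in X$ for all $x\in X$, $u\in U$. $\mathcal{K}_\infty$ denotes the continuous, strictly increasing, unbounded functions $\gamma:[0,\infty)\to[0,\infty)$ with $\gamma(0)=0$. *)

From HB Require Import structures.
From mathcomp Require Import all_boot all_order all_algebra.
From mathcomp Require Import all_classical all_reals all_analysis.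
Set Implicit Arguments. Unset Strict Implicit. Unset Printing Implicit Defensive.
Import Order.TTheory GRing.Theory Num.Theory numFieldNormedType.Exports.
Local Open Scope ring_scope.
Local Open Scope classical_set_scope.

Definition is_norm (R : realType) (m : nat) (N : 'rV[R]_m -> R) : Prop :=
  [/\ forall x, N x = 0 -> x = 0,
      forall (a : R) x, N (a *: x) = `|a| * N x &
      forall x y, N (x + y) <= N x + N y].

(* Class K_infinity (functions on [0,oo), represented on R). *)
Definition Kinf (R : realType) (k : R -> R) : Prop :=
  [/\ k 0 = 0,
      {within [set x : R | 0 <= x], continuous k},
      (forall x y, 0 <= x -> x < y -> k x < k y) &
      (forall M : R, exists r, 0 <= r /\ M < k r)].

Definition Xbar (R : realType) (n : nat -> nat) (I : seq nat) :=
  forall j : seq_sub I, 'rV[R]_(n (ssval j)).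

Definition xbar_norm (R : realType) (n : nat -> nat)
  (N : forall k, 'rV[R]_(n k) -> R) (I : seq nat) (xb : Xbar R n I) : R :=
  \big[Num.max/0]_(j : seq_sub I) N (ssval j) (xb j).

Definition restrict (R : realType) (n : nat -> nat) (I : seq nat)
  (x : forall k, 'rV[R]_(n k)) : Xbar R n I := fun j => x (ssval j).

(* x is an element of the l^infty-type space (bounded sequence of norms) *)
Definition bounded_seq (R : realType) (d : nat -> nat)
  (N : forall k, 'rV[R]_(d k) -> R) (x : forall k, 'rV[R]_(d k)) : Prop :=
  exists M : R, forall k, N k (x k) <= M.

Definition supnorm (R : realType) (d : nat -> nat)
  (N : forall k, 'rV[R]_(d k) -> R) (x : forall k, 'rV[R]_(d k)) : R :=
  sup (range (fun k => N k (x k))).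

Definition net_f (R : realType) (n p : nat -> nat) (I : nat -> seq nat)
  (F : forall i, 'rV[R]_(n i) -> Xbar R n (I i) -> 'rV[R]_(p i) -> 'rV[R]_(n i))
  (x : forall k, 'rV[R]_(n k)) (u : forall k, 'rV[R]_(p k)) :
  forall k, 'rV[R]_(n k) :=
  fun i => F i (x i) (@restrict R n (I i) x) (u i).

Definition well_posed (R : realType) (n p : nat -> nat) (I : nat -> seq nat)
  (N : forall k, 'rV[R]_(n k) -> R) (Nu : forall k, 'rV[R]_(p k) -> R)
  (F : forall i, 'rV[R]_(n i) -> Xbar R n (I i) -> 'rV[R]_(p i) -> 'rV[R]_(n i))
  : Prop :=
  forall x u, bounded_seq N x -> bounded_seq Nu u -> bounded_seq N (net_f F x u).

Definition cont_sub (R : realType) (n p : nat -> nat) (I : nat -> seq nat)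
  (N : forall k, 'rV[R]_(n k) -> R) (Nu : forall k, 'rV[R]_(p k) -> R) (i : nat)
  (Fi : 'rV[R]_(n i) -> Xbar R n (I i) -> 'rV[R]_(p i) -> 'rV[R]_(n i)) : Prop :=
  forall x xb u (e : R), 0 < e -> exists2 d : R, 0 < d &
    forall x' xb' u', N i (x - x') < d ->
      xbar_norm N (fun j => xb j - xb' j) < d -> Nu i (u - u') < d ->
      N i (Fi x xb u - Fi x' xb' u') < e.

(* (iii) => (i) is immediate.  Conversely, let the network be well posed.  Each
   f_i, being continuous, is bounded on the compact ball of radius r of its
   finite-dimensional domain.  These bounds are uniform in i: otherwise one can
   choose subsystems i_0, i_1, ... whose neighbourhoods {i_k} u I_(i_k) are
   pairwise disjoint (each j belongs to finitely many I_i) together with states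
   in the r-ball on which |f_(i_k)| > k; glued together, these states give a
   bounded x and u with f(x, u) unbounded.  The uniform bounds on the balls of
   radius m are then dominated by a piecewise linear K_oo function kappa, and
   (ii), (iii) follow from kappa (max a b) <= kappa a + kappa b. *)

From mathcomp Require Import all_boot all_order all_algebra.
From mathcomp Require Import all_classical all_reals all_analysis.
From mathcomp Require Import lra.
Import Order.TTheory GRing.Theory Num.Theory numFieldNormedType.Exports.
Local Open Scope ring_scope.
Local Open Scope classical_set_scope.
Import ArrowAsProduct.

Lemma continuous_compact_bound {R : realType} {T : topologicalType} {g : T -> R}
    {A : set T} :
  continuous g -> compact A -> exists B, forall y, A y -> `|g y| <= B.
Proof.
move=> gc Ac.
have /compact_bounded [M [_ HM]] : compact (g @` A).
  by apply: continuous_compact => //; exact: continuous_subspaceT.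
exists (`|M| + 1) => y Ay; apply: (HM (`|M| + 1)); last by exists y.
by apply: le_lt_trans (ler_norm M) _; rewrite ltrDl.
Qed.

Lemma mx_coord_le_norm {R : realType} {m : nat} (y : 'rV[R]_m) c : `|y ord0 c| <= `|y|.
Proof.
rewrite -[`|y|]/(mx_norm y) mx_normrE.
exact: (le_bigmax _ (fun ij : 'I_1 * 'I_m => `|y ij.1 ij.2|) (ord0, c)).
Qed.

Section is_norm_theory.
Context {R : realType} {m : nat} {N : 'rV[R]_m -> R} (hN : is_norm N).

Lemma is_norm_eq0 x : N x = 0 -> x = 0.
Proof. by case: hN => h _ _; exact: h. Qed.

Lemma is_normZ a x : N (a *: x) = `|a| * N x.
Proof. by case: hN. Qed.

Lemma is_normD x y : N (x + y) <= N x + N y.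
Proof. by case: hN. Qed.

Lemma is_norm0 : N 0 = 0.
Proof. by have := is_normZ 0 0; rewrite scale0r normr0 mul0r. Qed.

Lemma is_normN x : N (- x) = N x.
Proof. by rewrite -scaleN1r is_normZ normrN normr1 mul1r. Qed.

Lemma is_norm_ge0 x : 0 <= N x.
Proof.
have := is_normD x (- x); rewrite subrr is_norm0 is_normN -mulr2n.
by rewrite pmulrn_lge0.
Qed.

Lemma is_norm_gt0 {x : 'rV[R]_m} : x != 0 -> 0 < N x.
Proof. by move=> x0; rewrite lt0r is_norm_ge0 andbT; apply: contra x0 => /eqP/is_norm_eq0 ->. Qed.

Lemma is_norm_dist x y : `|N x - N y| <= N (x - y).
Proof.
rewrite ler_norml; apply/andP; split.
- by have := is_normD (y - x) x; rewrite subrK -opprB is_normN; lra.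
- by have := is_normD (x - y) y; rewrite subrK; lra.
Qed.

Lemma is_norm_le_mx_norm : exists2 C, 0 <= C & forall y, N y <= C * `|y|.
Proof.
exists (\sum_(c < m) N 'e_c); first by apply: sumr_ge0 => c _; exact: is_norm_ge0.
move=> y; rewrite {1}(row_sum_delta y) mulr_suml.
elim/big_ind2: _ => [|x1 y1 x2 y2 h1 h2|c _]; first by rewrite is_norm0.
  exact: le_trans (is_normD _ _) (lerD h1 h2).
by rewrite is_normZ [leRHS]mulrC ler_wpM2r ?is_norm_ge0 ?mx_coord_le_norm.
Qed.

Lemma is_norm_nbhs (x : 'rV[R]_m) {d : R} : 0 < d -> \forall y \near x, N (x - y) < d.
Proof.
move=> d0; have [C C0 hC] := is_norm_le_mx_norm.
have Cd0 : 0 < d / (C + 1) by rewrite divr_gt0 // ltr_wpDl.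
apply/nbhs_ballP; exists (d / (C + 1)) => // y; rewrite -ball_normE /= => xy.
apply: le_lt_trans (hC _) (le_lt_trans (ler_wpM2l C0 (ltW xy)) _).
by rewrite mulrA ltr_pdivrMr ?ltr_wpDl // mulrDr mulr1 mulrC ltrDl.
Qed.

Lemma is_norm_continuous : continuous N.
Proof.
move=> x; have nbhs_x_filter := nbhs_filter x; apply/cvgrPdist_lt => e e0.
by apply: filterS (is_norm_nbhs x e0) => y; apply: le_lt_trans (is_norm_dist _ _).
Qed.

Lemma mx_norm_le_is_norm : exists2 c, 0 < c & forall y, `|y| <= c * N y.
Proof.
(* [h] is continuous and positive, and equals [N] on the unit sphere. *)
pose h y := N y + `|1 - `|y| |.
have h_gt0 y : 0 < h y.
  rewrite /h; have [y0|y0] := eqVneq y 0.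
    by rewrite y0 is_norm0 normr0 subr0 normr1 add0r.
  by apply: lt_le_trans (is_norm_gt0 y0) _; rewrite lerDl.
have hVc : continuous (fun y => (h y)^-1).
  move=> x; have nbhs_x_filter := nbhs_filter x; apply: cvgV; first by rewrite gt_eqF.
  apply: cvgD; first exact: is_norm_continuous.
  by apply: cvg_norm; apply: cvgB; [exact: cvg_cst|exact: norm_continuous].
have ball_compact : compact [set y : 'rV[R]_m | `|y| <= 1].
  apply: bounded_closed_compact.
    by exists 1; split => // M M1 y /le_trans; apply; exact: ltW.
  exact: (continuous_closedP _).1 (@norm_continuous _ _) _ (@closed_le _ 1).
have [B HB] := continuous_compact_bound hVc ball_compact.
exists (`|B| + 1) => [|y]; first by rewrite ltr_pwDr.
have [->|y0] := eqVneq y 0; first by rewrite is_norm0 mulr0 normr0.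
have ny_gt0 : 0 < `|y| by rewrite normr_gt0.
have Ny_gt0 := is_norm_gt0 y0.
pose y' := `|y|^-1 *: y.
have y'_unit : `|y'| = 1 by rewrite normrZ normfV normr_id mulVf ?gt_eqF.
have y'_ball : `|y'| <= 1 by rewrite y'_unit.
have hy' : h y' = N y / `|y|.
  by rewrite /h y'_unit subrr normr0 addr0 is_normZ ger0_norm ?invr_ge0 ?ltW // mulrC.
have := HB y' y'_ball; rewrite hy' invf_div ger0_norm; last first.
  by rewrite divr_ge0 // ltW.
rewrite ler_pdivrMr // => /le_trans; apply; rewrite ler_wpM2r ?(ltW Ny_gt0) //.
by apply: le_trans (ler_norm B) _; rewrite lerDl.
Qed.

Lemma compact_is_norm_ball r : compact [set y | N y <= r].
Proof.
have [c c0 hc] := mx_norm_le_is_norm.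
apply: bounded_closed_compact.
  exists (c * r); split => [|M crM y /= Nyr]; first exact: num_real.
  apply: le_trans (hc y) (le_trans _ (ltW crM)).
  by rewrite ler_wpM2l // ltW.
exact: (continuous_closedP _).1 is_norm_continuous _ (@closed_le _ r).
Qed.

End is_norm_theory.

Section xbar_norm_theory.
Context {R : realType} {n : nat -> nat} {N : forall k, 'rV[R]_(n k) -> R}.
Context {J : seq nat} {xb : Xbar R n J}.

Lemma le_xbar_norm (j : seq_sub J) : N (ssval j) (xb j) <= xbar_norm N xb.
Proof. exact: (le_bigmax _ (fun j => N (ssval j) (xb j))). Qed.

Lemma xbar_norm_ge0 : 0 <= xbar_norm N xb.
Proof. by rewrite /xbar_norm; elim/big_rec: _ => // j a _ a0; rewrite le_max a0 orbT. Qed.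

Lemma xbar_norm_le r :
  0 <= r -> (forall j, N (ssval j) (xb j) <= r) -> xbar_norm N xb <= r.
Proof. by move=> r0 h; apply: bigmax_le. Qed.

Lemma xbar_norm_lt r :
  0 < r -> (forall j, N (ssval j) (xb j) < r) -> xbar_norm N xb < r.
Proof. by move=> r0 h; apply: bigmax_lt. Qed.

End xbar_norm_theory.


Section supnorm_theory.
Context {R : realType} {d : nat -> nat} {N : forall k, 'rV[R]_(d k) -> R}.
Context {x : forall k, 'rV[R]_(d k)}.

Lemma le_supnorm k : bounded_seq N x -> N k (x k) <= supnorm N x.
Proof. by case=> M hM; apply: ub_le_sup; [exists M => _ [j _ <-]|exists k]. Qed.

Lemma supnorm_le M : (forall k, N k (x k) <= M) -> supnorm N x <= M.
Proof. by move=> hM; apply: ge_sup; [exists (N 0%N (x 0%N)), 0%N|move=> _ [j _ <-]]. Qed.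

End supnorm_theory.

Lemma nbhs_pair {T U : topologicalType} {a : T} {b : U} {P : set T} {Q : set U} :
  nbhs a P -> nbhs b Q -> \forall w \near (a, b), P w.1 /\ Q w.2.
Proof. by move=> hP hQ; exists (P, Q) => // -[w1 w2] []. Qed.

Section subsystem.
Context {R : realType} {n p : nat -> nat} {I : nat -> seq nat} {i : nat}.
Context {N : forall k, 'rV[R]_(n k) -> R} {Nu : forall k, 'rV[R]_(p k) -> R}.
Context {Fi : 'rV[R]_(n i) -> Xbar R n (I i) -> 'rV[R]_(p i) -> 'rV[R]_(n i)}.
Hypotheses (hN : forall k, is_norm (N k)) (hNu : is_norm (Nu i)).
Hypothesis hF : cont_sub N Nu Fi.

Lemma cont_sub_continuous :
  continuous (fun z : 'rV[R]_(n i) *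
      ((forall j : seq_sub (I i), 'rV[R]_(n (ssval j))) * 'rV[R]_(p i)) =>
    N i (Fi z.1 z.2.1 z.2.2)).
Proof.
case=> x [xb u]; have nbhs_z_filter := nbhs_filter (x, (xb, u)).
apply/cvgrPdist_lt => e e0; have [d d0 hd] := hF x xb u e e0.
have near_xb : \forall w \near xb, xbar_norm N (fun j => xb j - w j) < d.
  have : \forall w \near xb, forall j, N (ssval j) (xb j - w j) < d.
    apply: (filter_forall (f := fun j w => N (ssval j) (xb j - w j) < d)
      (nbhs_filter xb)) => j.
    exact: (@proj_continuous _ (fun j : seq_sub (I i) => 'rV[R]_(n (ssval j))) j xb _
      (is_norm_nbhs (hN _) (xb j) d0)).
  by apply: filterS => w; apply: xbar_norm_lt.
have := nbhs_pair (is_norm_nbhs (hN i) x d0)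
  (nbhs_pair near_xb (is_norm_nbhs hNu u d0)).
apply: filterS => -[x' [xb' u']] /= [hx [hxb hu]].
exact: le_lt_trans (is_norm_dist (hN i) _ _) (hd _ _ _ hx hxb hu).
Qed.

Lemma cont_sub_bounded r : exists B, forall x xb u,
  N i x <= r -> xbar_norm N xb <= r -> Nu i u <= r -> N i (Fi x xb u) <= B.
Proof.
have xb_compact := @tychonoff _ (fun j : seq_sub (I i) => 'rV[R]_(n (ssval j)))
  (fun j => [set y | N (ssval j) y <= r]) (fun j => compact_is_norm_ball (hN _) r).
have A_compact := compact_setX (compact_is_norm_ball (hN i) r)
  (compact_setX xb_compact (compact_is_norm_ball hNu r)).
have [B HB] := continuous_compact_bound cont_sub_continuous A_compact.
exists B => x xb u hx hxb hu; apply: le_trans (ler_norm _) (HB (x, (xb, u)) _).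
by split => //; split => // j; exact: le_trans (le_xbar_norm _) hxb.
Qed.

End subsystem.

Lemma extend_from_seq_sub {T : nat -> Type} (P : forall k, T k -> Prop) {J : seq nat}
    {xb : forall j : seq_sub J, T (ssval j)} {y0 : forall k, T k} :
  (forall k, P k (y0 k)) -> (forall j, P (ssval j) (xb j)) ->
  exists y : forall k, T k, [/\ forall j, y (ssval j) = xb j,
    forall k, k \notin J -> y k = y0 k & forall k, P k (y k)].
Proof.
move=> Py0 Pxb.
suff [y [yxb yy0 Py]] : exists y : forall k, T k, [/\
    forall j, j \in index_enum (seq_sub J) -> y (ssval j) = xb j,
    forall k, k \notin J -> y k = y0 k & forall k, P k (y k)].
  by exists y; split=> // j; apply: yxb; rewrite mem_index_enum.
elim: (index_enum _) => [|j s [y [yxb yy0 Py]]]; first by exists y0.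
exists (eqtype.dfwith y (xb j)); split.
- move=> j'; rewrite inE; have [<- _|/eqP j'j /= j's] := eqVneq j' j.
    exact: eqtype.dfwith_in.
  by rewrite eqtype.dfwith_out ?yxb //; apply/eqP => /val_inj jj'; apply: j'j.
- move=> k kJ; rewrite eqtype.dfwith_out ?yy0 //.
  by apply: contra kJ => /eqP <-; exact: ssvalP.
- by move=> k; case: eqtype.dfwithP.
Qed.

Lemma glue_on_disjoint_supports {T : nat -> Type} {S : nat -> seq nat} (y : nat -> forall t, T t) :
  (forall k k' t, t \in S k -> t \in S k' -> k = k') ->
  exists X : forall t, T t,
    (forall k t, t \in S k -> X t = y k t) /\ (forall t, exists k, X t = y k t).
Proof.
move=> disj.
have /choice [own hown] : forall t, exists k, forall k', t \in S k' -> k' = k.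
  move=> t; have [[k tk]|none] := pselect (exists k, t \in S k).
    by exists k => k' tk'; exact: disj tk' tk.
  by exists 0%N => k' tk'; case: none; exists k'.
exists (fun t => y (own t) t); split => [k t tk|t]; last by exists (own t).
by rewrite -(hown t k tk).
Qed.

Lemma sparse_selection {S : nat -> seq nat} {P : nat -> nat -> Prop} :
  (forall t, exists m, forall j, t \in S j -> (j < m)%N) ->
  (forall k m, exists2 i, (m <= i)%N & P k i) ->
  exists idx : nat -> nat, (forall k, P k (idx k)) /\
    (forall k k' t, t \in S (idx k) -> t \in S (idx k') -> k = k').
Proof.
move=> /choice [M hM] far.
have /choice [pick hpick] : forall km : nat * nat, exists i, (km.2 <= i)%N /\ P km.1 i.
  by case=> k m; have [i mi Pki] := far k m; exists i.
(* An index beyond [L m] has its whole support beyond [m]; choosing every new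
   index beyond the supports of the previous ones makes the supports disjoint. *)
pose L m := \max_(t < m) M t.
have L_far m i t : (L m <= i)%N -> t \in S i -> (m <= t)%N.
  move=> Li ti; rewrite leqNgt; apply/negP => tm.
  have := leq_trans (hM t i ti) (leq_trans (leq_bigmax (Ordinal tm)) Li).
  by rewrite ltnn.
pose next b k := maxn b (\max_(t <- S (pick (k, L b))) t.+1).
pose ms := fix ms k := if k is k'.+1 then next (ms k') k' else 0%N.
exists (fun k => pick (k, L (ms k))); split => [k|]; first exact: (hpick (k, _)).2.
have in_block k t : t \in S (pick (k, L (ms k))) -> (ms k <= t < ms k.+1)%N.
  move=> tk; rewrite (L_far _ _ _ (hpick (k, _)).1 tk) /=.
  apply: leq_trans (leq_maxr _ _).
  exact: (leq_bigmax_seq (P := xpredT) (F := fun t => t.+1) t tk).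
have ms_mono : {homo ms : a b / (a <= b)%N}.
  by apply: homo_leq => [//|b a c|k]; [exact: leq_trans|exact: leq_maxl].
move=> k k' t; wlog kk' : k k' / (k <= k')%N.
  move=> W tk tk'; case: (leqP k k') => [|/ltnW] kk'; first exact: W.
  by apply/esym/W.
move: kk'; rewrite leq_eqVlt => /orP[/eqP //|kk'] /in_block/andP[_ tk].
move=> /in_block/andP[tk' _].
by have := leq_trans (ms_mono _ _ kk') tk'; rewrite leqNgt tk.
Qed.

Section Kinf_theory.
Context {R : realType} {k : R -> R} (hk : Kinf k).

Lemma Kinf_le {s t : R} : 0 <= s -> s <= t -> k s <= k t.
Proof.
case: hk => _ _ k_lt _ s0; rewrite le_eqVlt => /predU1P[-> //|st].
exact/ltW/k_lt.
Qed.

Lemma Kinf_ge0 {s : R} : 0 <= s -> 0 <= k s.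
Proof. by case: hk => k0 _ _ _ s0; rewrite -k0 Kinf_le. Qed.

Lemma Kinf_max {s t : R} : 0 <= s -> 0 <= t -> k (Num.max s t) <= k s + k t.
Proof.
move=> s0 t0; have [_|_] := leP s t.
  by rewrite lerDr Kinf_ge0.
by rewrite lerDl Kinf_ge0.
Qed.

End Kinf_theory.

Definition ramp {R : realType} (t : R) : R :=
  if t <= 0 then 0 else if t <= 1 then t else 1.

Lemma ramp0 {R : realType} (t : R) : t <= 0 -> ramp t = 0.
Proof. by rewrite /ramp => ->. Qed.

Lemma ramp1 {R : realType} (t : R) : 1 <= t -> ramp t = 1.
Proof. by rewrite /ramp => t1; case: (leP t 0) => t0; [lra|case: (leP t 1) => //; lra]. Qed.

Lemma ramp_ge0 {R : realType} (t : R) : 0 <= ramp t.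
Proof. by rewrite /ramp; case: (leP t 0) => // t0; case: (leP t 1) => //; lra. Qed.

Lemma ramp_incr {R : realType} {s t : R} : s <= t -> 0 <= ramp t - ramp s <= t - s.
Proof.
rewrite /ramp => st.
by case: (leP s 0); case: (leP s 1); case: (leP t 0); case: (leP t 1) => *;
  apply/andP; split; lra.
Qed.

Section ramp_sum.
Context {R : realType} (e : nat -> R) (e_ge0 : forall j, 0 <= e j).

Definition ramp_sum (K : nat) (s : R) : R := \sum_(j < K) e j * ramp (s - j%:R).

Lemma ramp_sum_ge0 K s : 0 <= ramp_sum K s.
Proof. by apply: sumr_ge0 => j _; rewrite mulr_ge0 ?ramp_ge0. Qed.

Lemma ramp_sum_le K s t : s <= t -> ramp_sum K s <= ramp_sum K t.
Proof.
move=> st; apply: ler_sum => j _; rewrite ler_wpM2l // -subr_ge0.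
by case/andP: (ramp_incr (lerB st (lexx j%:R))).
Qed.

Lemma ramp_sum_lipschitz K s t :
  `|ramp_sum K t - ramp_sum K s| <= (\sum_(j < K) e j) * `|t - s|.
Proof.
wlog st : s t / s <= t.
  move=> W; have [|/ltW ts] := leP s t; first exact: W.
  by rewrite distrC [`|t - s|]distrC; exact: W.
rewrite ger0_norm ?subr_ge0 ?ramp_sum_le // ger0_norm ?subr_ge0 //.
rewrite /ramp_sum -sumrB mulr_suml; apply: ler_sum => j _.
rewrite -mulrBr ler_wpM2l //.
by case/andP: (ramp_incr (lerB st (lexx j%:R))); rewrite opprB addrA subrK.
Qed.

Lemma ramp_sum_term K s (j : 'I_K) : e j * ramp (s - j%:R) <= ramp_sum K s.
Proof.
rewrite /ramp_sum (bigD1 j) //= lerDl.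
by apply: sumr_ge0 => k _; rewrite mulr_ge0 ?ramp_ge0.
Qed.

Lemma ramp_sum_stable {K1 K2 : nat} {s : R} : s <= K1%:R -> s <= K2%:R ->
  ramp_sum K1 s = ramp_sum K2 s.
Proof.
wlog K12 : K1 K2 / (K1 <= K2)%N.
  by move=> W s1 s2; case: (leqP K1 K2) => [|/ltnW] K12; [|symmetry]; exact: W.
move=> s1 _; rewrite /ramp_sum -(subnKC K12) big_split_ord /=.
rewrite [X in _ = _ + X]big1 ?addr0 // => j _; rewrite ramp0 ?mulr0 // subr_le0.
by rewrite (le_trans s1) // ler_nat leq_addr.
Qed.

(* The summand [s] makes [ramp_kappa] strictly increasing and unbounded; the
   sum may be cut at any [K >= s], since the later ramps vanish. *)
Definition ramp_kappa (s : R) : R := s + ramp_sum (Num.truncn s).+1 s.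

Lemma ramp_kappaE {K : nat} {s : R} : s <= K%:R -> ramp_kappa s = s + ramp_sum K s.
Proof. by move=> sK; rewrite /ramp_kappa (ramp_sum_stable (ltW (truncnS_gt s)) sK). Qed.

Lemma ramp_kappa_continuous : continuous ramp_kappa.
Proof.
move=> x; pose K := (Num.truncn (x + 1)).+1; pose E := \sum_(j < K) e j.
have E1_gt0 : 0 < 1 + E by rewrite ltr_pwDl // sumr_ge0.
have lip y : `|x - y| < 1 -> `|ramp_kappa y - ramp_kappa x| <= (1 + E) * `|y - x|.
  move=> xy; have xK : x <= K%:R by apply: ltW (lt_trans _ (truncnS_gt _)); lra.
  have yK : y <= K%:R.
    by apply: ltW (lt_trans _ (truncnS_gt _)); move: xy; rewrite ltr_norml; lra.
  rewrite (ramp_kappaE yK) (ramp_kappaE xK) opprD addrACA mulrDl mul1r.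
  by apply: le_trans (ler_normD _ _) _; rewrite lerD2l ramp_sum_lipschitz.
apply/cvgrPdist_lt => eps eps0.
have d_gt0 : 0 < Num.min 1 (eps / (1 + E)) by rewrite lt_min ltr01 divr_gt0.
near=> y; have xy : `|x - y| < Num.min 1 (eps / (1 + E)).
  by near: y; apply: filterS (near_ball x _ d_gt0) => y; rewrite -ball_normE.
rewrite distrC; apply: le_lt_trans (lip _ (lt_le_trans xy _)) _.
  by rewrite ge_min lexx.
rewrite distrC mulrC -ltr_pdivlMr //; apply: lt_le_trans xy _.
by rewrite ge_min lexx orbT.
Unshelve. all: by end_near.
Qed.

Lemma ramp_kappa_Kinf : Kinf ramp_kappa.
Proof.
have ge_id s : 0 <= s -> s <= ramp_kappa s.
  by move=> s0; rewrite /ramp_kappa lerDl ramp_sum_ge0.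
split.
- by rewrite (ramp_kappaE (K := 0%N)) // /ramp_sum big_ord0 addr0.
- exact/continuous_subspaceT/ramp_kappa_continuous.
- move=> s t s0 st; have tK := ltW (truncnS_gt t).
  rewrite (ramp_kappaE tK) (ramp_kappaE (le_trans (ltW st) tK)).
  by rewrite ltr_leD // ramp_sum_le // ltW.
- move=> M; exists (`|M| + 1); split; first by rewrite addr_ge0.
  apply: lt_le_trans (ge_id _ _); last by rewrite addr_ge0.
  by apply: le_lt_trans (ler_norm M) _; rewrite ltrDl.
Qed.

Lemma ramp_kappa_ge {s : R} : 1 <= s -> e (Num.truncn s).-1 <= ramp_kappa s.
Proof.
move=> s1; have m_gt0 : (0 < Num.truncn s)%N by rewrite truncn_gt0.
have lt_m : ((Num.truncn s).-1 < (Num.truncn s).+1)%N by rewrite prednK // ltnS.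
rewrite /ramp_kappa; apply: le_trans _
  (ler_wpDl (le_trans ler01 s1) (ramp_sum_term _ s (Ordinal lt_m))).
rewrite ramp1 ?mulr1 //=.
have := truncn_le s; rewrite (le_trans ler01 s1) -(prednK m_gt0) mulrS; lra.
Qed.

End ramp_sum.

Lemma Kinf_dominates {R : realType} (b : nat -> R) :
  exists2 k, Kinf k & forall s, 0 <= s -> b (Num.truncn s) <= `|b 0%N| + k s.
Proof.
pose e j := Num.max 0 (b j.+1).
have e_ge0 j : 0 <= e j by rewrite le_max lexx.
have k_Kinf := ramp_kappa_Kinf e e_ge0.
exists (ramp_kappa e) => // s s0.
have [s1|s_lt1] := boolP (1 <= s); last first.
  by rewrite (truncn0Pn _ s_lt1) (le_trans (ler_norm _)) // lerDl (Kinf_ge0 k_Kinf).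
apply: le_trans _ (ler_wpDl (normr_ge0 _) (ramp_kappa_ge e e_ge0 s1)).
by rewrite /e prednK ?truncn_gt0 // le_max lexx orbT.
Qed.


Definition bounded_on_balls {R : realType} {n p : nat -> nat} {I : nat -> seq nat}
    (N : forall i, 'rV[R]_(n i) -> R) (Nu : forall i, 'rV[R]_(p i) -> R)
    (F : forall i, 'rV[R]_(n i) -> Xbar R n (I i) -> 'rV[R]_(p i) -> 'rV[R]_(n i))
    (r : R) : Prop :=
  exists B, forall i x xb u, N i x <= r -> xbar_norm N xb <= r -> Nu i u <= r ->
    N i (F i x xb u) <= B.

Section network.
Context {R : realType} {n p : nat -> nat} {I : nat -> seq nat}.
Context {N : forall i, 'rV[R]_(n i) -> R} {Nu : forall i, 'rV[R]_(p i) -> R}.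
Context {F : forall i, 'rV[R]_(n i) -> Xbar R n (I i) -> 'rV[R]_(p i) -> 'rV[R]_(n i)}.
Hypotheses (hN : forall i, is_norm (N i)) (hNu : forall i, is_norm (Nu i)).
Hypothesis hI : forall i, i \notin I i.
Hypothesis hfin : forall i, exists m, forall j, i \in I j -> (j < m)%N.
Hypothesis hF : forall i, cont_sub N Nu (F i).

Lemma net_f_local {x x' : forall k, 'rV[R]_(n k)} {u u' : forall k, 'rV[R]_(p k)}
    {i : nat} :
  (forall t, t \in i :: I i -> x t = x' t) -> u i = u' i ->
  net_f F x u i = net_f F x' u' i.
Proof.
move=> xx' uu'; rewrite /net_f uu' (xx' i (mem_head _ _)); congr F.
apply: functional_extensionality_dep => j; apply: xx'.
by rewrite inE ssvalP orbT.
Qed.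

Lemma extend_local_state {i : nat} (x : 'rV[R]_(n i)) (xb : Xbar R n (I i))
    (u : 'rV[R]_(p i)) :
  exists (y : forall k, 'rV[R]_(n k)) (v : forall k, 'rV[R]_(p k)), [/\
    forall k, N k (y k) <= Num.max (N i x) (xbar_norm N xb),
    forall k, Nu k (v k) <= Nu i u & net_f F y v i = F i x xb u].
Proof.
pose M := Num.max (N i x) (xbar_norm N xb).
pose y0 := eqtype.dfwith (fun k => 0 : 'rV[R]_(n k)) x.
have y0_bd k : N k (y0 k) <= M.
  rewrite /y0; case: eqtype.dfwithP => [|k' _]; first by rewrite le_max lexx.
  by rewrite is_norm0 // le_max xbar_norm_ge0 orbT.
have xb_bd j : N (ssval j) (xb j) <= M by rewrite le_max le_xbar_norm orbT.
have [y [yxb yi ybd]] := extend_from_seq_sub (fun k v => N k v <= M) y0_bd xb_bd.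
exists y, (eqtype.dfwith (fun k => 0 : 'rV[R]_(p k)) u); split => //.
- by move=> k; case: eqtype.dfwithP => [|k' _]; rewrite ?is_norm0 ?is_norm_ge0.
- rewrite /net_f (yi i (hI i)) eqtype.dfwith_in /y0 eqtype.dfwith_in; congr F.
  exact: functional_extensionality_dep yxb.
Qed.

Lemma unbounded_on_balls_far r : ~ bounded_on_balls N Nu F r -> forall (k : R) m,
  exists2 i, (m <= i)%N & exists x u, [/\ forall t, N t (x t) <= r,
    forall t, Nu t (u t) <= r & k < N i (net_f F x u i)].
Proof.
move=> unbounded k m.
have /choice [b hb] : forall i, exists b, forall x xb u,
    N i x <= r -> xbar_norm N xb <= r -> Nu i u <= r -> N i (F i x xb u) <= b.
  by move=> i; exact: cont_sub_bounded hN (hNu i) (hF i) r.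
pose B := Num.max k (\big[Num.max/0]_(t < m) b t).
have [i [x [xb [u [hx hxb hu hB]]]]] : exists i x xb u, [/\ N i x <= r,
    xbar_norm N xb <= r, Nu i u <= r & B < N i (F i x xb u)].
  apply: contrapT => none; apply: unbounded; exists B => i x xb u hx hxb hu.
  by rewrite leNgt; apply/negP => hB; apply: none; exists i, x, xb, u.
exists i.
  rewrite leqNgt; apply/negP => im.
  have biB : b i <= B.
    by rewrite le_max (le_bigmax _ (fun t : 'I_m => b t) (Ordinal im)) orbT.
  by have := lt_le_trans hB (le_trans (hb i x xb u hx hxb hu) biB); rewrite ltxx.
have [y [v [ybd vbd yv]]] := extend_local_state x xb u.
exists y, v; split.
- by move=> t; apply: le_trans (ybd t) _; rewrite ge_max hx hxb.
- by move=> t; apply: le_trans (vbd t) hu.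
- by rewrite yv; apply: le_lt_trans hB; rewrite le_max lexx.
Qed.

Lemma well_posed_bounded_on_balls : well_posed N Nu F -> forall r, bounded_on_balls N Nu F r.
Proof.
move=> wp r; apply: contrapT => /unbounded_on_balls_far far.
have finS t : exists m, forall j, t \in j :: I j -> (j < m)%N.
  have [m hm] := hfin t; exists (maxn t.+1 m) => j; rewrite inE.
  by case/orP => [/eqP->|/hm jm]; rewrite leq_max ?ltnSn ?jm ?orbT.
have [idx [bad disj]] := sparse_selection finS (fun k m => far k%:R m).
have /choice [xu hxu] : forall k, exists xu : (forall t, 'rV[R]_(n t)) * (forall t, 'rV[R]_(p t)),
    [/\ forall t, N t (xu.1 t) <= r, forall t, Nu t (xu.2 t) <= r &
      k%:R < N (idx k) (net_f F xu.1 xu.2 (idx k))].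
  by move=> k; have [x [u h]] := bad k; exists (x, u).
have [X [Xloc Xof]] := glue_on_disjoint_supports (fun k => (xu k).1) disj.
have [U [Uloc Uof]] := glue_on_disjoint_supports (fun k => (xu k).2) disj.
have [M hM] : bounded_seq N (net_f F X U).
  apply: wp; exists r => t; [have [k ->] := Xof t|have [k ->] := Uof t];
    by case: (hxu k).
pose k := (Num.truncn M).+1.
have [_ _ hk] := hxu k.
have := hM (idx k); rewrite (net_f_local (x' := (xu k).1) (u' := (xu k).2)).
- by move=> /(lt_le_trans hk)/(lt_trans (truncnS_gt M)); rewrite ltxx.
- by move=> t; exact: Xloc.
- by apply: Uloc; exact: mem_head.
Qed.

Lemma well_posed_max_bound : well_posed N Nu F -> exists C k, [/\ 0 < C, Kinf k &
  forall i x xb u, N i (F i x xb u) <=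
    C + k (Num.max (N i x) (Num.max (xbar_norm N xb) (Nu i u)))].
Proof.
move=> wp; have /choice [B hB] := fun m : nat => well_posed_bounded_on_balls wp m.+1%:R.
have [k hk dom] := Kinf_dominates B.
exists (`|B 0%N| + 1), k; split => // i x xb u.
set s := Num.max _ _; have s0 : 0 <= s by rewrite le_max is_norm_ge0.
have s_le : s <= (Num.truncn s).+1%:R := ltW (truncnS_gt s).
apply: le_trans (hB _ i x xb u _ _ _) _.
- by apply: le_trans s_le; rewrite le_max lexx.
- by apply: le_trans s_le; rewrite /s !le_max lexx orbT.
- by apply: le_trans s_le; rewrite /s !le_max lexx !orbT.
by apply: le_trans (dom s s0) _; rewrite lerD2r lerDl.
Qed.

Lemma well_posed_supnorm_bound : well_posed N Nu F ->
  exists C k, 0 < C /\ Kinf k /\ forall x u, bounded_seq N x -> bounded_seq Nu u ->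
    supnorm N (net_f F x u) <= C + k (supnorm N x) + k (supnorm Nu u).
Proof.
move=> /well_posed_max_bound [C [k [C0 hk hb]]].
exists C, k; do 2!split => //; move=> x u bx bu; apply: supnorm_le => i.
apply: le_trans (hb _ _ _ _) _; rewrite -addrA lerD2l.
have xi_le := le_supnorm i bx; have ui_le := le_supnorm i bu.
have x0 := le_trans (is_norm_ge0 (hN i) _) xi_le.
have u0 := le_trans (is_norm_ge0 (hNu i) _) ui_le.
apply: le_trans _ (Kinf_max hk x0 u0); apply: (Kinf_le hk).
  by rewrite le_max is_norm_ge0.
rewrite !ge_max !le_max xi_le ui_le orbT /= andbT; apply/orP; left.
by apply: xbar_norm_le => // j; exact: le_supnorm.
Qed.

Lemma well_posed_local_bound : well_posed N Nu F ->
  exists C k, 0 < C /\ Kinf k /\ forall i x xb u,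
    N i (F i x xb u) <= C + k (N i x) + k (xbar_norm N xb) + k (Nu i u).
Proof.
move=> /well_posed_max_bound [C [k [C0 hk hb]]].
exists C, k; do 2!split => //; move=> i x xb u.
apply: le_trans (hb _ _ _ _) _; rewrite -!addrA lerD2l.
have xb0 : 0 <= xbar_norm N xb := xbar_norm_ge0.
apply: le_trans (Kinf_max hk (is_norm_ge0 (hN i) x) _) _; first by rewrite le_max xb0.
by rewrite lerD2l Kinf_max ?is_norm_ge0.
Qed.

Lemma local_bound_well_posed : (exists C k, 0 < C /\ Kinf k /\ forall i x xb u,
    N i (F i x xb u) <= C + k (N i x) + k (xbar_norm N xb) + k (Nu i u)) ->
  well_posed N Nu F.
Proof.
case=> C [k [_ [hk hb]]] x u [Mx hMx] [Mu hMu].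
have Mx0 : 0 <= Mx := le_trans (is_norm_ge0 (hN 0%N) _) (hMx 0%N).
exists (C + k Mx + k Mx + k Mu) => i; apply: le_trans (hb _ _ _ _) _.
rewrite !lerD ?lexx // (Kinf_le hk) ?is_norm_ge0 ?xbar_norm_ge0 //.
by apply: xbar_norm_le => // j; exact: hMx.
Qed.

End network.

Theorem lemma1 (R : realType) (n p : nat -> nat)
  (N : forall i, 'rV[R]_(n i) -> R) (Nu : forall i, 'rV[R]_(p i) -> R)
  (I : nat -> seq nat)
  (F : forall i, 'rV[R]_(n i) -> Xbar R n (I i) -> 'rV[R]_(p i) -> 'rV[R]_(n i)) :
  (forall i, (0 < n i)%N) -> (forall i, (0 < p i)%N) ->
  (forall i, is_norm (N i)) -> (forall i, is_norm (Nu i)) ->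
  (forall i, i \notin I i) ->
  (forall i, exists m, forall j, i \in I j -> (j < m)%N) ->
  (forall i, cont_sub N Nu (F i)) ->
  (well_posed N Nu F <->
     (well_posed N Nu F /\
      exists (C : R) (k : R -> R), 0 < C /\ Kinf k /\
        forall x u, bounded_seq N x -> bounded_seq Nu u ->
          supnorm N (net_f F x u) <= C + k (supnorm N x) + k (supnorm Nu u)))
  /\
  (well_posed N Nu F <->
     exists (C : R) (k : R -> R), 0 < C /\ Kinf k /\
       forall i (x : 'rV[R]_(n i)) (xb : Xbar R n (I i)) (u : 'rV[R]_(p i)),
         N i (F i x xb u) <= C + k (N i x) + k (xbar_norm N xb) + k (Nu i u)).
Proof.
(* The dimensions need not be positive. *)
move=> _ _ hN hNu hI hfin hF; split.
- split=> [wp|[] //]; split=> //.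
  exact: well_posed_supnorm_bound hN hNu hI hfin hF wp.
- split; first exact: well_posed_local_bound hN hNu hI hfin hF.
  exact: local_bound_well_posed hN hNu.
Qed.
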